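(* Let $n\geq 2$ be an integer, $b:=-n+i$, and let $D\subset\{0,1,\ldots,n^2\}$ be such that $\Delta:=D-D$ is sparse. If $\alpha=\sum_{j\ge1}\alpha_jb^{-j}$ with $\alpha_j\in\Delta$ for all $j$, then $$\underline{\dim}_B\big(C_{n,D}\cap(C_{n,D}+\alpha)\big)=\liminf_{k\to\infty}\frac{\log M_k(\alpha)}{k\log|b|},$$ where $M_k(\alpha):=\prod_{j=1}^k|D\cap(D+\alpha_j)|$.
   Context: $C_{n,D}$ is the attractor of $\{z\mapsto b^{-1}(z+d): d\in D\}$, i.e. $C_{n,D}=\{\sum_{j\ge1}d_jb^{-j}: d_j\in D\}$. $\underline{\dim}_B$ denotes lower box-counting dimension. $\Delta$ is called sparse if for all $\delta\neq\delta'$ in $\Delta$, $|\delta-\delta'|>2$ when $n\ge5$, and $|\delta-\delta'|>3$ when $n\in\{2,3,4\}$. *)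

From Stdlib Require Import Reals ZArith List Bool.
From Coquelicot Require Import Coquelicot.
Open Scope R_scope.

Definition base (n : nat) : C := (- INR n, 1)%R.

(* the complex number  sum_{j>=1} c_j b^{-j}  (c : nat -> Z, index 0 unused) *)
Definition digit_term (n : nat) (c : nat -> Z) (j : nat) : C :=
  Cmult (IZR (c (S j)), 0%R) (Cinv (pow_n (K := C_Ring) (base n) (S j))).

Definition expansion (n : nat) (c : nat -> Z) (z : C) : Prop :=
  is_series (digit_term n c) z.

Definition inDz (D : nat -> bool) (x : Z) : bool :=
  (0 <=? x)%Z && D (Z.to_nat x).

Definition CnD (n : nat) (D : nat -> bool) (z : C) : Prop :=
  exists d : nat -> nat, (forall j, (1 <= j)%nat -> D (d j) = true) /\
    expansion n (fun j => Z.of_nat (d j)) z.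

Definition in_Delta (D : nat -> bool) (x : Z) : Prop :=
  exists d d', D d = true /\ D d' = true /\ x = (Z.of_nat d - Z.of_nat d')%Z.

Definition sparse (n : nat) (D : nat -> bool) : Prop :=
  forall x y, in_Delta D x -> in_Delta D y -> x <> y ->
    if (5 <=? n)%nat then (2 < Z.abs (x - y))%Z else (3 < Z.abs (x - y))%Z.

(* |D ∩ (D + a)|, for D ⊂ {0,...,n^2} *)
Definition card_shift (n : nat) (D : nat -> bool) (a : Z) : nat :=
  length (filter (fun d => D d && inDz D (Z.of_nat d - a)%Z) (seq 0 (n * n + 1))).

Fixpoint Mk (n : nat) (D : nat -> bool) (a : nat -> Z) (k : nat) : nat :=
  match k with
  | O => 1%nat
  | S k' => (Mk n D a k' * card_shift n D (a k))%nat
  end.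

Definition covers_with (m : nat) (delta : R) (F : C -> Prop) : Prop :=
  exists U : nat -> C -> Prop,
    (forall i, (i < m)%nat -> forall x y, U i x -> U i y -> Cmod (Cminus x y) <= delta) /\
    (forall z, F z -> exists i, (i < m)%nat /\ U i z).

(* N_delta(F): smallest number of sets of diameter <= delta covering F (+oo if none) *)
Definition cover_number (F : C -> Prop) (delta : R) : Rbar :=
  Rbar_glb (fun x => exists m : nat, x = Finite (INR m) /\ covers_with m delta F).

Definition box_ratio (F : C -> Prop) (delta : R) : Rbar :=
  match cover_number F delta with
  | Finite r => Finite (ln r / (- ln delta))
  | other => other
  end.

(* liminf_{delta -> 0+} log N_delta(F) / (- log delta) *)
Definition lower_box_dim (F : C -> Prop) : Rbar :=
  Rbar_lub (fun y => exists eps, 0 < eps <= 1 /\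
    y = Rbar_glb (fun x => exists delta, 0 < delta < eps /\ x = box_ratio F delta)).

From Stdlib Require Import Reals ZArith List Bool.
From Coquelicot Require Import Coquelicot.
Open Scope R_scope.
From Stdlib Require Import Lra Lia ClassicalEpsilon.
Import ListNotations.

(* Since Delta = D - D is sparse, 0 has only the trivial expansion sum e_j b^-j
   with digits e_j in Delta - Delta.  Indeed these digits are bounded by 2 n^2, so shifting the
   expansion twice (three times for n = 2) yields a point of a fixed small rectangle whose
   imaginary part is -e_1 (4 e_1 - e_2 for n = 2); this keeps |e_1| below the gap of Delta,
   forcing e_1 = 0, and one iterates.  Consequently the points of C_{n,D} ∩ (C_{n,D} + alpha)
   are exactly the sums sum d_j b^-j with d_j in D ∩ (D + alpha_j).  The M_k(alpha) cylinders
   of level k cover this set by sets of diameter n^2 |b|^-k, and points of distinct cylinders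
   are |b|^-k apart, because b^k times their difference is a nonzero Gaussian integer.  Hence
   M_k(alpha) <= N_delta <= M_k'(alpha) whenever n^2 |b|^-k' <= delta < |b|^-k, which gives the
   liminf formula. *)

Lemma le_epsilon_lt (x y : R) : (forall eps, 0 < eps -> x < y + eps) -> x <= y.
Proof. intro H. apply le_epsilon. intros eps Heps. now apply Rlt_le, H. Qed.

(** * Expansions in base [b = -n + i] *)

Lemma base_neq0 n : base n <> 0%C.
Proof. intro H. injection H. lra. Qed.

Lemma Cmod_base_ge2 n : (2 <= n)%nat -> 2 <= Cmod (base n).
Proof.
  intro Hn. apply (le_INR 2) in Hn. simpl in Hn.
  unfold Cmod, base. simpl. rewrite <- (sqrt_square 2) by lra. apply sqrt_le_1_alt. nra.
Qed.

Lemma digit_term_eq n c j :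
  digit_term n c j = (RtoC (IZR (c (S j))) * (/ base n) ^ S j)%C.
Proof. unfold digit_term. now rewrite Cpow_inv by apply base_neq0. Qed.

Lemma expansion_ext n c c' z :
  (forall j, c (S j) = c' (S j)) -> expansion n c z -> expansion n c' z.
Proof. intro H. apply is_series_ext. intro j. unfold digit_term. now rewrite H. Qed.

Lemma expansion_sub n c1 c2 z1 z2 : expansion n c1 z1 -> expansion n c2 z2 ->
  expansion n (fun j => (c1 j - c2 j)%Z) (z1 - z2)%C.
Proof.
  intros H1 H2. eapply is_series_ext; [|exact (is_series_minus _ _ _ _ H1 H2)].
  intro j. change (digit_term n c1 j - digit_term n c2 j = digit_term n (fun j => (c1 j - c2 j)%Z) j)%C.
  rewrite !digit_term_eq, minus_IZR, RtoC_minus. ring.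
Qed.

Lemma expansion_shift n c z : expansion n c z ->
  expansion n (fun j => c (S j)) (base n * z - RtoC (IZR (c 1%nat)))%C.
Proof.
  intro H.
  assert (Htail : is_series (fun j => digit_term n c (S j)) (z - digit_term n c 0)%C).
  { apply is_series_incr_1.
    change (is_series (digit_term n c) (z - digit_term n c 0 + digit_term n c 0)%C).
    now replace (z - _ + _)%C with z by ring. }
  replace (base n * z - RtoC (IZR (c 1%nat)))%C with (scal (base n) (z - digit_term n c 0)%C).
  - eapply is_series_ext; [|exact (is_series_scal (base n) _ _ Htail)].
    intro j. change (base n * digit_term n c (S j) = digit_term n (fun j => c (S j)) j)%C.
    rewrite !digit_term_eq, (Cpow_S _ (S j)). field. apply base_neq0.
  - change (base n * (z - digit_term n c 0) = base n * z - RtoC (IZR (c 1%nat)))%C.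
    rewrite digit_term_eq, Cpow_1_r. field. apply base_neq0.
Qed.

Lemma digit_term_S n c j :
  digit_term n c (S j) = (digit_term n (fun j => c (S j)) j / base n)%C.
Proof. rewrite !digit_term_eq, (Cpow_S _ (S j)). field. apply base_neq0. Qed.

Lemma sum_n_digit_term_S n c K :
  sum_n (digit_term n c) (S K) =
  ((RtoC (IZR (c 1%nat)) + sum_n (digit_term n (fun j => c (S j))) K) / base n)%C.
Proof.
  induction K as [|K IH].
  - rewrite sum_Sn, !sum_O, digit_term_S, digit_term_eq, Cpow_1_r.
    unfold plus; simpl. field. apply base_neq0.
  - rewrite sum_Sn, IH, (sum_Sn _ K), (digit_term_S _ _ (S K)).
    unfold plus; simpl. field. apply base_neq0.
Qed.

Lemma is_series_approx (a : nat -> C) z : is_series a z ->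
  forall eps, 0 < eps -> exists K, Cmod (z - sum_n a K)%C < eps.
Proof.
  intros H eps Heps.
  assert (Hz : locally z (fun y => Cmod (z - y)%C < eps)).
  { apply locally_le_locally_norm. exists (mkposreal eps Heps). intros y Hy.
    rewrite <- Cmod_opp. replace (- (z - y))%C with (minus y z) by (unfold minus, plus, opp; simpl; ring).
    exact Hy. }
  destruct (H _ Hz) as [K HK]. exists K. apply HK, le_n.
Qed.

(* Every expansion is a limit of finite compositions of the maps [w |-> (c + w) / b]. *)
Lemma expansion_ind n (P : C -> Prop) (A : Z -> Prop) :
  (forall z, (forall eps, 0 < eps -> exists w, P w /\ Cmod (z - w)%C < eps) -> P z) ->
  P (RtoC 0) ->
  (forall x w, A x -> P w -> P ((RtoC (IZR x) + w) / base n)%C) ->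
  forall c z, (forall j, A (c (S j))) -> expansion n c z -> P z.
Proof.
  intros Hclosed H0 Hstable.
  assert (Hpartial : forall K c, (forall j, A (c (S j))) -> P (sum_n (digit_term n c) K)).
  { induction K as [|K IH]; intros c Hc.
    - rewrite sum_O, digit_term_eq, Cpow_1_r.
      replace (RtoC (IZR (c 1%nat)) * / base n)%C with ((RtoC (IZR (c 1%nat)) + RtoC 0) / base n)%C
        by (unfold Cdiv; ring).
      auto.
    - rewrite sum_n_digit_term_S. apply Hstable; [apply Hc|apply IH; intro j; apply Hc]. }
  intros c z Hc Hz. apply Hclosed. intros eps Heps.
  destruct (is_series_approx _ _ Hz eps Heps) as [K HK].
  exists (sum_n (digit_term n c) K). auto.
Qed.

Lemma expansion_eq0 n c z : (forall j, c (S j) = 0%Z) -> expansion n c z -> z = RtoC 0.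
Proof.
  apply (expansion_ind n (fun z => z = RtoC 0) (fun x => x = 0%Z)).
  - intros y Hy. apply Cmod_eq_0, Rle_antisym; [|apply Cmod_ge_0].
    apply le_epsilon_lt. intros eps Heps. destruct (Hy eps Heps) as [w [-> Hw]].
    replace (y - 0)%C with y in Hw by ring. lra.
  - reflexivity.
  - intros x w -> ->. unfold Cdiv. ring.
Qed.

Lemma im_le_Cmod (z : C) : Rabs (Im z) <= Cmod z.
Proof. eapply Rle_trans; [apply Rmax_r|apply Rmax_Cmod]. Qed.

Lemma Re_Im_div_base n (x : Z) (w : C) :
  Re ((RtoC (IZR x) + w) / base n)%C = (Im w - INR n * (IZR x + Re w)) / (INR n * INR n + 1) /\
  Im ((RtoC (IZR x) + w) / base n)%C = - (IZR x + Re w + INR n * Im w) / (INR n * INR n + 1).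
Proof.
  destruct w as [u v]. unfold Cdiv, Cinv, base, Cmult, Cplus, Re, Im. simpl.
  assert (INR n * INR n + 1 <> 0) by (pose proof (pos_INR n); nra).
  split; field; nra.
Qed.

Lemma Rabs_div_le (x y m : R) : 0 < y -> - (m * y) <= x <= m * y -> Rabs (x / y) <= m.
Proof.
  intros Hy Hx. apply Rabs_le. unfold Rdiv.
  split; [apply (Rmult_le_reg_r y)|apply (Rmult_le_reg_r y)];
    rewrite ?Rmult_assoc, ?Rinv_l by lra; lra.
Qed.

(* The two inequalities make the rectangle [|Re z| <= rho, |Im z| <= be] invariant under the
   maps [w |-> (c + w) / b] with [|c| <= B]. *)
Lemma expansion_rect n (be rho B : R) :
  0 <= be -> 0 <= rho ->
  be + INR n * (B + rho) <= rho * (INR n * INR n + 1) ->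
  B + rho + INR n * be <= be * (INR n * INR n + 1) ->
  forall c z, (forall j, Rabs (IZR (c (S j))) <= B) -> expansion n c z ->
  Rabs (Re z) <= rho /\ Rabs (Im z) <= be.
Proof.
  intros Hbe Hrho Hre Him.
  apply (expansion_ind n (fun z => Rabs (Re z) <= rho /\ Rabs (Im z) <= be)
                         (fun x => Rabs (IZR x) <= B)).
  - intros z Hz. split; apply le_epsilon_lt; intros eps Heps;
      destruct (Hz eps Heps) as [w [[Hw1 Hw2] Hd]].
    + pose proof (re_le_Cmod (z - w)%C) as H. pose proof (Rabs_triang_inv (Re z) (Re w)).
      replace (Re (z - w)%C) with (Re z - Re w) in H by (destruct z, w; simpl; ring). lra.
    + pose proof (im_le_Cmod (z - w)%C) as H. pose proof (Rabs_triang_inv (Im z) (Im w)).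
      replace (Im (z - w)%C) with (Im z - Im w) in H by (destruct z, w; simpl; ring). lra.
  - simpl. rewrite Rabs_R0. lra.
  - intros x w Hx [Hw1 Hw2]. destruct (Re_Im_div_base n x w) as [-> ->].
    pose proof (pos_INR n).
    apply Rabs_le_between in Hx, Hw1, Hw2.
    split; apply Rabs_div_le; nra.
Qed.

Lemma expansion_Cmod_le n (B : R) : 2 <= Cmod (base n) ->
  forall c z, (forall j, Rabs (IZR (c (S j))) <= B) -> expansion n c z -> Cmod z <= B.
Proof.
  intros Hb c z Hc.
  assert (HB : 0 <= B) by (eapply Rle_trans; [apply Rabs_pos|apply (Hc 0%nat)]).
  revert c z Hc.
  apply (expansion_ind n (fun z => Cmod z <= B) (fun x => Rabs (IZR x) <= B)).
  - intros z Hz. apply le_epsilon_lt. intros eps Heps. destruct (Hz eps Heps) as [w [Hw Hd]].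
    pose proof (Cmod_triangle w (z - w)%C) as H.
    replace (w + (z - w))%C with z in H by ring. lra.
  - rewrite Cmod_0. lra.
  - intros x w Hx Hw. rewrite Cmod_div by apply base_neq0.
    pose proof (Cmod_triangle (RtoC (IZR x)) w) as H. rewrite Cmod_R in H.
    apply Rle_div_l; nra.
Qed.

Lemma expansion_tail_le n (B : R) : 2 <= Cmod (base n) ->
  forall k c z, (forall j, (1 <= j <= k)%nat -> c j = 0%Z) ->
  (forall j, Rabs (IZR (c (S j))) <= B) -> expansion n c z ->
  Cmod z <= B * (/ Cmod (base n)) ^ k.
Proof.
  intros Hb k. induction k as [|k IH]; intros c z H0 Hc Hz.
  - rewrite pow_O, Rmult_1_r. eapply expansion_Cmod_le; eauto.
  - pose proof (expansion_shift _ _ _ Hz) as Hshift.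
    rewrite (H0 1%nat) in Hshift by lia.
    specialize (IH (fun j => c (S j)) _ ltac:(intros j Hj; apply H0; lia) ltac:(intro j; apply Hc) Hshift).
    replace (base n * z - RtoC (IZR 0))%C with (base n * z)%C in IH by (simpl; ring).
    rewrite Cmod_mult in IH. rewrite <- tech_pow_Rmult.
    apply (Rmult_le_reg_l (Cmod (base n))); [lra|].
    replace (Cmod (base n) * (B * (/ Cmod (base n) * (/ Cmod (base n)) ^ k)))
      with (B * (/ Cmod (base n)) ^ k) by (field; lra).
    exact IH.
Qed.

(** * Gaussian integers *)

Definition gaussian (z : C) : Prop := exists x y : Z, z = (IZR x, IZR y).

Lemma gaussian_plus z w : gaussian z -> gaussian w -> gaussian (z + w)%C.
Proof.
  intros [x [y ->]] [u [v ->]]. exists (x + u)%Z, (y + v)%Z.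
  unfold Cplus. simpl. now rewrite !plus_IZR.
Qed.

Lemma gaussian_mult z w : gaussian z -> gaussian w -> gaussian (z * w)%C.
Proof.
  intros [x [y ->]] [u [v ->]]. exists (x * u - y * v)%Z, (x * v + y * u)%Z.
  unfold Cmult. simpl. now rewrite minus_IZR, plus_IZR, !mult_IZR.
Qed.

Lemma gaussian_IZR x : gaussian (RtoC (IZR x)).
Proof. now exists x, 0%Z. Qed.

Lemma gaussian_base_pow n k : gaussian (base n ^ k)%C.
Proof.
  induction k as [|k IH].
  - exact (gaussian_IZR 1).
  - apply gaussian_mult; auto. exists (- Z.of_nat n)%Z, 1%Z.
    unfold base. now rewrite opp_IZR, <- INR_IZR_INZ.
Qed.

Lemma gaussian_Cmod_lt1 z : gaussian z -> Cmod z < 1 -> z = RtoC 0.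
Proof.
  intros [x [y ->]] H.
  pose proof (re_le_Cmod (IZR x, IZR y)) as Hx. pose proof (im_le_Cmod (IZR x, IZR y)) as Hy.
  simpl in Hx, Hy. rewrite <- abs_IZR in Hx, Hy.
  assert (x = 0%Z) by (enough (Z.abs x < 1)%Z by lia; apply lt_IZR; lra).
  assert (y = 0%Z) by (enough (Z.abs y < 1)%Z by lia; apply lt_IZR; lra).
  now subst.
Qed.

Lemma expansion_finite_gaussian n k c z :
  (forall j, (k <= j)%nat -> c (S j) = 0%Z) -> expansion n c z -> gaussian (base n ^ k * z)%C.
Proof.
  revert c z. induction k as [|k IH]; intros c z H0 Hz.
  - rewrite (expansion_eq0 n c z) by (auto with arith).
    replace (base n ^ 0 * RtoC 0)%C with (RtoC (IZR 0)) by (simpl; ring). apply gaussian_IZR.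
  - specialize (IH (fun j => c (S j)) _ ltac:(intros j Hj; apply H0; lia) (expansion_shift _ _ _ Hz)).
    replace (base n ^ S k * z)%C
      with (base n ^ k * (base n * z - RtoC (IZR (c 1%nat))) + base n ^ k * RtoC (IZR (c 1%nat)))%C
      by (rewrite Cpow_S; ring).
    apply gaussian_plus; auto. apply gaussian_mult; [apply gaussian_base_pow|apply gaussian_IZR].
Qed.

Lemma expansion_exists n (B : R) : 2 <= Cmod (base n) ->
  forall c, (forall j, Rabs (IZR (c (S j))) <= B) -> exists z, expansion n c z.
Proof.
  intros Hb c Hc.
  set (q := / Cmod (base n)).
  assert (Hq : 0 < q < 1).
  { unfold q. split; [apply Rinv_0_lt_compat; lra|].
    rewrite <- Rinv_1. apply Rinv_lt_contravar; lra. }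
  assert (Hgeom : ex_series (fun j => B * q * q ^ j)).
  { apply (ex_series_scal (V := R_NormedModule)). apply ex_series_geom.
    rewrite Rabs_pos_eq; lra. }
  assert (H : ex_series (K := C_AbsRing) (V := C_CompleteNormedModule) (digit_term n c)).
  { apply (ex_series_le _ (fun j => B * q * q ^ j)); [intro j|exact Hgeom].
    change (Cmod (digit_term n c j) <= B * q * q ^ j).
    rewrite digit_term_eq, Cmod_mult, Cmod_R, Cmod_pow, Cmod_inv by apply base_neq0.
    fold q. rewrite <- tech_pow_Rmult.
    pose proof (pow_le q j ltac:(lra)).
    rewrite <- Rmult_assoc. apply Rmult_le_compat_r; [lra|].
    apply Rmult_le_compat_r; [lra|apply Hc]. }
  destruct H as [z Hz]. now exists z.
Qed.

(** * Covering numbers and lower box dimension *)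

Lemma Rbar_lub_spec (E : Rbar -> Prop) : Rbar_is_lub E (Rbar_lub E).
Proof. unfold Rbar_lub. now destruct (Rbar_ex_lub E). Qed.

Lemma Rbar_glb_spec (E : Rbar -> Prop) : Rbar_is_glb E (Rbar_glb E).
Proof. unfold Rbar_glb. now destruct (Rbar_ex_glb E). Qed.

Lemma Rbar_le_Finite_eps (y : Rbar) (L : R) :
  (forall e, 0 < e -> Rbar_le y (Finite (L + e))) -> Rbar_le y (Finite L).
Proof.
  intro H. destruct y as [y| |]; simpl; auto.
  - apply le_epsilon_lt. intros e He. specialize (H (e / 2) ltac:(lra)). simpl in H. lra.
  - exact (H 1 Rlt_0_1).
Qed.

Lemma Finite_le_Rbar_eps (y : Rbar) (L : R) :
  (forall e, 0 < e -> Rbar_le (Finite (L - e)) y) -> Rbar_le (Finite L) y.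
Proof.
  intro H. destruct y as [y| |]; simpl; auto.
  - apply le_epsilon_lt. intros e He. specialize (H (e / 2) ltac:(lra)). simpl in H. lra.
  - exact (H 1 Rlt_0_1).
Qed.

Lemma lower_box_dim_le (F : C -> Prop) (L : R) :
  (forall eps e, 0 < eps <= 1 -> 0 < e ->
     exists delta x, 0 < delta < eps /\ box_ratio F delta = Finite x /\ x <= L + e) ->
  Rbar_le (lower_box_dim F) (Finite L).
Proof.
  intro H. apply (proj2 (Rbar_lub_spec _)). intros y [eps [Heps ->]].
  apply Rbar_le_Finite_eps. intros e He.
  destruct (H eps e Heps He) as [delta [x [Hdelta [Hx HxL]]]].
  eapply Rbar_le_trans; [apply (proj1 (Rbar_glb_spec _)); now exists delta|now rewrite Hx].
Qed.

Lemma lower_box_dim_ge (F : C -> Prop) (L : R) :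
  (forall e, 0 < e -> exists eps, 0 < eps <= 1 /\
     forall delta, 0 < delta < eps -> exists x, box_ratio F delta = Finite x /\ L - e <= x) ->
  Rbar_le (Finite L) (lower_box_dim F).
Proof.
  intro H. apply Finite_le_Rbar_eps. intros e He.
  destruct (H e He) as [eps [Heps Hratio]].
  eapply Rbar_le_trans; [|apply (proj1 (Rbar_lub_spec _)); now exists eps].
  apply (proj2 (Rbar_glb_spec _)). intros y [delta [Hdelta ->]].
  destruct (Hratio delta Hdelta) as [x [-> Hx]]. exact Hx.
Qed.

Lemma covers_with_mono m delta delta' (F : C -> Prop) :
  delta <= delta' -> covers_with m delta F -> covers_with m delta' F.
Proof.
  intros Hd [U [HU Hcov]]. exists U. split; auto.
  intros i Hi x y Hx Hy. specialize (HU i Hi x y Hx Hy). lra.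
Qed.

(* Each covering set meets the points of at most one member of a [delta]-separated family. *)
Lemma covers_with_separated_le {A : Type} (m : nat) (delta : R) (F : C -> Prop)
  (Q : A -> C -> Prop) (L : list A) :
  covers_with m delta F -> NoDup L ->
  (forall p, In p L -> exists z, Q p z /\ F z) ->
  (forall p q z w, In p L -> In q L -> Q p z -> Q q w -> Cmod (z - w)%C <= delta -> p = q) ->
  (length L <= m)%nat.
Proof.
  intros [U [HU Hcov]] HL Hpts Hsep.
  set (index p := epsilon (inhabits 0%nat) (fun i => (i < m)%nat /\ exists z, Q p z /\ U i z)).
  assert (Hindex : forall p, In p L -> (index p < m)%nat /\ exists z, Q p z /\ U (index p) z).
  { intros p Hp. apply epsilon_spec. destruct (Hpts p Hp) as [z [Hz Fz]].
    destruct (Hcov z Fz) as [i [Hi Uz]]. eauto. }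
  rewrite <- (length_map index), <- (length_seq m 0).
  apply NoDup_incl_length.
  - apply NoDup_map_NoDup_ForallPairs; [|exact HL].
    intros p q Hp Hq E. destruct (Hindex p Hp) as [Hi [z [Qz Uz]]].
    destruct (Hindex q Hq) as [_ [w [Qw Uw]]]. rewrite <- E in Uw.
    exact (Hsep p q z w Hp Hq Qz Qw (HU _ Hi z w Uz Uw)).
  - intros i Hi. apply in_map_iff in Hi. destruct Hi as [p [<- Hp]].
    apply in_seq. split; [lia|]. apply Hindex, Hp.
Qed.

Lemma ln_gt0 r : 1 < r -> 0 < ln r.
Proof. intro Hr. rewrite <- ln_1. apply ln_increasing; lra. Qed.

Lemma ln_lt0 x : 0 < x < 1 -> ln x < 0.
Proof. intro Hx. rewrite <- ln_1. apply ln_increasing; lra. Qed.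

Lemma exists_invpow_lt r y : 1 < r -> 0 < y -> exists k, (/ r) ^ k < y.
Proof.
  intros Hr Hy.
  assert (Hq : Rabs (/ r) < 1).
  { rewrite Rabs_pos_eq by (left; apply Rinv_0_lt_compat; lra).
    rewrite <- Rinv_1. apply Rinv_lt_contravar; lra. }
  destruct (pow_lt_1_zero _ Hq y Hy) as [k Hk]. exists k.
  specialize (Hk k (le_n k)). eapply Rle_lt_trans; [apply Rle_abs|exact Hk].
Qed.

Lemma ln_invpow r k : 1 < r -> ln ((/ r) ^ k) = - (INR k * ln r).
Proof.
  intro Hr. rewrite ln_pow by (apply Rinv_0_lt_compat; lra). rewrite ln_Rinv by lra. ring.
Qed.

Lemma exists_scale r delta : 1 < r -> 0 < delta < 1 ->
  exists k, delta < (/ r) ^ k /\ - ln delta <= (INR k + 2) * ln r.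
Proof.
  intros Hr Hdelta.
  pose proof (ln_gt0 r Hr) as Hlnr.
  pose proof (ln_lt0 delta Hdelta) as Hlnd.
  set (t := - ln delta / ln r).
  assert (Ht : - ln delta = t * ln r) by (unfold t; field; lra).
  assert (Ht0 : 0 < t) by (unfold t; apply Rdiv_lt_0_compat; lra).
  destruct (archimed t) as [Hup1 Hup2].
  exists (Z.to_nat (up t - 2)).
  assert (Hk : INR (Z.to_nat (up t - 2)) < t /\ t <= INR (Z.to_nat (up t - 2)) + 2).
  { rewrite INR_IZR_INZ. destruct (Z.le_gt_cases 2 (up t)).
    - rewrite Z2Nat.id, minus_IZR by lia. simpl. lra.
    - replace (Z.to_nat (up t - 2)) with 0%nat by lia. simpl.
      assert (IZR (up t) <= 1) by (apply IZR_le; lia). lra. }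
  split; [|nra].
  apply ln_lt_inv; [lra|apply pow_lt, Rinv_0_lt_compat; lra|].
  rewrite ln_invpow by exact Hr. nra.
Qed.

Section CoveringNumbers.

Variables (F : C -> Prop) (r K : R) (M : nat -> nat).
Hypothesis Hr : 1 < r.
Hypothesis HK : 1 <= K.
Hypothesis Hcover : forall k, covers_with (M k) (K * (/ r) ^ k) F.
Hypothesis Hcover_ge :
  forall k m delta, delta < (/ r) ^ k -> covers_with m delta F -> (M k <= m)%nat.

Lemma cover_number_between delta : 0 < delta < 1 ->
  exists N, cover_number F delta = Finite N /\
    (forall k, delta < (/ r) ^ k -> INR (M k) <= N) /\
    (forall k, K * (/ r) ^ k <= delta -> N <= INR (M k)).
Proof.
  intro Hdelta. unfold cover_number.
  destruct (Rbar_glb_spec (fun x => exists m, x = Finite (INR m) /\ covers_with m delta F))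
    as [Hlb Hglb].
  set (N := Rbar_glb _) in *.
  assert (Hge : forall k, delta < (/ r) ^ k -> Rbar_le (Finite (INR (M k))) N).
  { intros k Hk. apply Hglb. intros x [m [-> Hm]]. apply le_INR. eapply Hcover_ge; eauto. }
  assert (Hle : forall k, K * (/ r) ^ k <= delta -> Rbar_le N (Finite (INR (M k)))).
  { intros k Hk. apply Hlb. exists (M k). split; auto. eapply covers_with_mono; eauto. }
  destruct (exists_invpow_lt r (delta / K) Hr) as [k0 Hk0].
  { apply Rdiv_lt_0_compat; lra. }
  assert (Hk0' : K * (/ r) ^ k0 <= delta).
  { apply Rlt_le. apply (Rmult_lt_compat_l K) in Hk0; [|lra].
    now replace (K * (delta / K)) with delta in Hk0 by (field; lra). }
  pose proof (Hge 0%nat ltac:(simpl; lra)) as H0. pose proof (Hle k0 Hk0') as H1.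
  destruct N as [N| |]; simpl in H0, H1; try contradiction.
  exists N. split; [reflexivity|split; [exact Hge|exact Hle]].
Qed.

Hypothesis HM_pos : forall k, (1 <= M k)%nat.
Hypothesis HM_le : forall k, INR (M k) <= r ^ (2 * k).

Let rate k := ln (INR (M k)) / (INR k * ln r).

Lemma ln_M_nonneg k : 0 <= ln (INR (M k)).
Proof. rewrite <- ln_1. apply ln_le; [lra|]. apply (le_INR 1), HM_pos. Qed.

Lemma ln_M_eq_rate k : (1 <= k)%nat -> ln (INR (M k)) = rate k * (INR k * ln r).
Proof.
  intro Hk. pose proof (ln_gt0 r Hr). apply (le_INR 1) in Hk. simpl in Hk.
  unfold rate. field. split; lra.
Qed.

Lemma rate_bounds k : 0 <= rate k <= 2.
Proof.
  pose proof (ln_gt0 r Hr). pose proof (ln_M_nonneg k).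
  destruct k as [|k].
  - unfold rate. simpl. rewrite Rmult_0_l, Rdiv_0_r. lra.
  - assert (Hk : 0 < INR (S k) * ln r) by (apply Rmult_lt_0_compat; [apply lt_0_INR; lia|lra]).
    unfold rate. split; [apply Rdiv_le_0_compat; lra|].
    apply Rle_div_l; [exact Hk|].
    eapply Rle_trans; [apply ln_le; [apply (lt_INR 0), HM_pos|apply HM_le]|].
    rewrite ln_pow, mult_INR by lra. simpl (INR 2). lra.
Qed.

Lemma rate_mul_le k : rate k * (INR k * ln r) <= ln (INR (M k)).
Proof.
  destruct k as [|k].
  - simpl. rewrite Rmult_0_l, Rmult_0_r. apply ln_M_nonneg.
  - rewrite ln_M_eq_rate by lia. lra.
Qed.

Lemma box_ratio_at_scale_le k : ln K < INR k * ln r ->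
  exists x, box_ratio F (K * (/ r) ^ k) = Finite x /\
            x <= rate k + 2 * ln K / (INR k * ln r - ln K).
Proof.
  intro Hk. pose proof (ln_gt0 r Hr) as Hlnr.
  assert (HlnK : 0 <= ln K) by (rewrite <- ln_1; apply ln_le; lra).
  assert (Hk1 : (1 <= k)%nat) by (destruct k; [simpl in Hk; lra|lia]).
  assert (Hpos : 0 < K * (/ r) ^ k) by (apply Rmult_lt_0_compat; [lra|apply pow_lt, Rinv_0_lt_compat; lra]).
  assert (Hln : ln (K * (/ r) ^ k) = ln K - INR k * ln r).
  { rewrite ln_mult, ln_invpow by (try apply pow_lt, Rinv_0_lt_compat; lra). ring. }
  assert (Hlt1 : K * (/ r) ^ k < 1) by (apply ln_lt_inv; [lra|lra|rewrite ln_1; lra]).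
  destruct (cover_number_between _ (conj Hpos Hlt1)) as [N [HN [HNge HNle]]].
  exists (ln N / - ln (K * (/ r) ^ k)). unfold box_ratio. rewrite HN. split; [reflexivity|].
  assert (HN1 : 1 <= N).
  { eapply Rle_trans; [apply (le_INR 1), (HM_pos 0%nat)|]. apply HNge. simpl. lra. }
  assert (HlnN : ln N <= rate k * (INR k * ln r)).
  { rewrite <- ln_M_eq_rate by exact Hk1. apply ln_le; [lra|]. apply HNle. lra. }
  pose proof (rate_bounds k). rewrite Hln.
  replace (rate k + 2 * ln K / (INR k * ln r - ln K))
    with ((rate k * (INR k * ln r - ln K) + 2 * ln K) / (INR k * ln r - ln K)) by (field; lra).
  replace (- (ln K - INR k * ln r)) with (INR k * ln r - ln K) by ring.
  apply Rmult_le_compat_r; [apply Rlt_le, Rinv_0_lt_compat; lra|nra].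
Qed.

Lemma box_ratio_ge delta k : 0 < delta < 1 -> delta < (/ r) ^ k ->
  - ln delta <= (INR k + 2) * ln r ->
  exists x, box_ratio F delta = Finite x /\ rate k - 4 / (INR k + 2) <= x.
Proof.
  intros Hdelta Hk Hscale. pose proof (ln_gt0 r Hr) as Hlnr.
  destruct (cover_number_between _ Hdelta) as [N [HN [HNge _]]].
  exists (ln N / - ln delta). unfold box_ratio. rewrite HN. split; [reflexivity|].
  assert (HlnN : rate k * (INR k * ln r) <= ln N).
  { eapply Rle_trans; [apply rate_mul_le|]. apply ln_le; [apply (lt_INR 0), HM_pos|auto]. }
  pose proof (ln_lt0 delta Hdelta) as Hlnd.
  pose proof (rate_bounds k) as Hu. pose proof (pos_INR k) as Hk0.
  apply Rle_div_r; [lra|].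
  destruct (Rle_lt_dec (rate k - 4 / (INR k + 2)) 0) as [Hneg|Hpos].
  - assert (0 <= ln N).
    { eapply Rle_trans; [|exact HlnN]. apply Rmult_le_pos; [lra|apply Rmult_le_pos; lra]. }
    nra.
  - eapply Rle_trans; [apply Rmult_le_compat_l; [lra|exact Hscale]|].
    replace ((rate k - 4 / (INR k + 2)) * ((INR k + 2) * ln r))
      with (rate k * (INR k * ln r) + (2 * rate k - 4) * ln r) by (field; lra).
    nra.
Qed.

Lemma lower_box_dim_le_of_frequently (L : R) :
  (forall e, 0 < e -> forall N, exists k, (N <= k)%nat /\ rate k < L + e) ->
  Rbar_le (lower_box_dim F) (Finite L).
Proof.
  intro Hfreq. apply lower_box_dim_le. intros eps e Heps He.
  pose proof (ln_gt0 r Hr) as Hlnr.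
  assert (HlnK : 0 <= ln K) by (rewrite <- ln_1; apply ln_le; lra).
  assert (Hlneps : ln eps <= 0) by (rewrite <- ln_1; apply ln_le; lra).
  destruct (INR_archimed (ln r) (ln K - ln eps + 4 * ln K / e) Hlnr) as [N HN].
  destruct (Hfreq (e / 2) ltac:(lra) N) as [k [Hk Huk]].
  assert (Hkr : INR N * ln r <= INR k * ln r) by (apply Rmult_le_compat_r; [lra|now apply le_INR]).
  assert (H4 : 0 <= 4 * ln K / e) by (apply Rdiv_le_0_compat; lra).
  destruct (box_ratio_at_scale_le k ltac:(lra)) as [x [Hx Hxle]].
  exists (K * (/ r) ^ k), x. repeat split; auto.
  - apply Rmult_lt_0_compat; [lra|apply pow_lt, Rinv_0_lt_compat; lra].
  - apply ln_lt_inv; [apply Rmult_lt_0_compat; [lra|apply pow_lt, Rinv_0_lt_compat; lra]|lra|].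
    rewrite ln_mult, ln_invpow by (try apply pow_lt, Rinv_0_lt_compat; lra). lra.
  - enough (2 * ln K / (INR k * ln r - ln K) <= e / 2) by lra.
    apply Rle_div_l; [lra|].
    assert (4 * ln K / e * e = 4 * ln K) by (field; lra). nra.
Qed.

Lemma lower_box_dim_ge_of_eventually (L : R) :
  (forall e, 0 < e -> exists N, forall k, (N <= k)%nat -> L - e < rate k) ->
  Rbar_le (Finite L) (lower_box_dim F).
Proof.
  intro Hev. apply lower_box_dim_ge. intros e He.
  pose proof (ln_gt0 r Hr) as Hlnr.
  destruct (Hev (e / 2) ltac:(lra)) as [N1 HN1].
  destruct (INR_unbounded (8 / e)) as [N2 HN2].
  set (k0 := Nat.max N1 N2).
  assert (Hpow : 0 < (/ r) ^ (k0 + 2)) by (apply pow_lt, Rinv_0_lt_compat; lra).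
  assert (Hpow1 : (/ r) ^ (k0 + 2) <= 1).
  { rewrite <- (pow1 (k0 + 2)). apply pow_incr. split; [left; apply Rinv_0_lt_compat; lra|].
    rewrite <- Rinv_1. left. apply Rinv_lt_contravar; lra. }
  exists ((/ r) ^ (k0 + 2)). split; [lra|]. intros delta Hdelta.
  destruct (exists_scale r delta Hr ltac:(lra)) as [k [Hk Hscale]].
  assert (Hk0 : (k0 < k)%nat).
  { apply INR_lt. apply (Rmult_lt_reg_r (ln r)); [exact Hlnr|].
    assert (ln delta < ln ((/ r) ^ (k0 + 2))) by (apply ln_increasing; lra).
    rewrite ln_invpow, plus_INR in * by exact Hr. simpl in *. lra. }
  destruct (box_ratio_ge delta k ltac:(lra) Hk Hscale) as [x [Hx Hxge]].
  exists x. split; [exact Hx|].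
  assert (L - e / 2 < rate k) by (apply HN1; lia).
  assert (HkN2 : INR N2 <= INR k) by (apply le_INR; lia).
  enough (4 / (INR k + 2) <= e / 2) by lra.
  apply Rle_div_l; [pose proof (pos_INR k); lra|].
  assert (8 / e * e = 8) by (field; lra). nra.
Qed.

Lemma lower_box_dim_eq_LimInf :
  lower_box_dim F = LimInf_seq (fun k => ln (INR (M k)) / (INR k * ln r)).
Proof.
  destruct (ex_LimInf_seq rate) as [l Hl].
  change (lower_box_dim F = LimInf_seq rate). rewrite (is_LimInf_seq_unique _ _ Hl).
  destruct l as [L| |].
  - apply Rbar_le_antisym.
    + apply lower_box_dim_le_of_frequently. intros e He. exact (proj1 (Hl (mkposreal e He))).
    + apply lower_box_dim_ge_of_eventually. intros e He. exact (proj2 (Hl (mkposreal e He))).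
  - destruct (Hl 3) as [N HN]. specialize (HN N (le_n N)). pose proof (rate_bounds N). lra.
  - destruct (Hl (-1) 0%nat) as [k [_ Hk]]. pose proof (rate_bounds k). lra.
Qed.

End CoveringNumbers.

(** * Zero has a unique expansion over [Delta - Delta] *)

Lemma expansion_zero_shift2 n c : expansion n c (RtoC 0) ->
  expansion n (fun j => c (S (S j))) (INR n * IZR (c 1%nat) - IZR (c 2%nat), - IZR (c 1%nat)).
Proof.
  intro H. pose proof (expansion_shift _ _ _ (expansion_shift _ _ _ H)) as H2.
  replace (INR n * IZR (c 1%nat) - IZR (c 2%nat), - IZR (c 1%nat)) with
    (base n * (base n * RtoC 0 - RtoC (IZR (c 1%nat))) - RtoC (IZR (c 2%nat)))%C; [exact H2|].
  unfold base, RtoC, Cmult, Cminus, Cplus, Copp. simpl. f_equal; ring.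
Qed.

Lemma Zabs_le_of_Rabs (x m : Z) (r : R) : Rabs (IZR x) <= r -> r < IZR m + 1 -> (Z.abs x <= m)%Z.
Proof.
  intros Hx Hr. rewrite <- abs_IZR in Hx.
  apply Z.lt_succ_r, lt_IZR. rewrite succ_IZR. lra.
Qed.

(* The twice-shifted point has imaginary part [-c_1]; the rectangles below are invariant for
   digits bounded by [2 n^2] and their height is below the sparseness gap. *)
Section ZeroExpansionFirstDigit.

Variables (n : nat) (c : nat -> Z).
Hypothesis Hzero : expansion n c (RtoC 0).
Hypothesis Hdigits : forall j, Rabs (IZR (c (S j))) <= 2 * (INR n * INR n).

Lemma zero_expansion_digit1_le2 : (5 <= n)%nat -> (Z.abs (c 1%nat) <= 2)%Z.
Proof.
  intro Hn. apply (le_INR 5) in Hn. simpl in Hn.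
  assert (Hsq : 0 <= (INR n - 5) * (INR n - 5)) by nra.
  destruct (expansion_rect n (299/100) (2 * INR n + 5/2) (2 * (INR n * INR n))
    ltac:(lra) ltac:(lra) ltac:(nra) ltac:(nra) _ _ (fun j => Hdigits (S (S j)))
    (expansion_zero_shift2 _ _ Hzero)) as [_ Him].
  simpl in Him. rewrite Rabs_Ropp in Him.
  apply (Zabs_le_of_Rabs _ _ _ Him). simpl. lra.
Qed.

Lemma zero_expansion_digit1_le3_n34 : (3 <= n <= 4)%nat -> (Z.abs (c 1%nat) <= 3)%Z.
Proof.
  intros [Hn3 Hn4]. apply (le_INR 3) in Hn3. apply (le_INR _ 4) in Hn4. simpl in Hn3, Hn4.
  assert (Hsq : 0 <= (INR n - 3) * (INR n - 3)) by nra.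
  destruct (expansion_rect n (39/10) (2 * INR n + 5/2) (2 * (INR n * INR n))
    ltac:(lra) ltac:(lra) ltac:(nra) ltac:(nra) _ _ (fun j => Hdigits (S (S j)))
    (expansion_zero_shift2 _ _ Hzero)) as [_ Him].
  simpl in Him. rewrite Rabs_Ropp in Him.
  apply (Zabs_le_of_Rabs _ _ _ Him). simpl. lra.
Qed.

(* For [n = 2] two shifts do not suffice; after a third one the imaginary part is [4 c_1 - c_2]. *)
Lemma zero_expansion_digit1_le3_n2 : n = 2%nat -> (Z.abs (c 1%nat) <= 3)%Z.
Proof.
  intro Hn. subst n. assert (I2 : INR 2 = 2) by (simpl; lra). rewrite I2 in Hdigits.
  pose proof (expansion_shift _ _ _ (expansion_zero_shift2 _ _ Hzero)) as H3.
  destruct (expansion_rect 2 5 7 8 ltac:(lra) ltac:(lra) ltac:(rewrite I2; lra) ltac:(rewrite I2; lra)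
    _ _ (fun j => Rle_trans _ (2 * (2 * 2)) 8 (Hdigits (S (S (S j)))) ltac:(lra)) H3) as [_ Him].
  replace (Im _) with (4 * IZR (c 1%nat) - IZR (c 2%nat)) in Him by (simpl; lra).
  assert (H2 := Hdigits 1%nat).
  rewrite <- mult_IZR, <- minus_IZR, <- abs_IZR in Him. rewrite <- abs_IZR in H2.
  assert (Z.abs (4 * c 1%nat - c 2%nat) <= 5)%Z by (apply le_IZR; lra).
  assert (Z.abs (c 2%nat) <= 8)%Z by (apply le_IZR; lra).
  lia.
Qed.

End ZeroExpansionFirstDigit.

Definition DeltaDelta_digits (D : nat -> bool) (c : nat -> Z) : Prop :=
  forall j, exists x y, in_Delta D x /\ in_Delta D y /\ c (S j) = (x - y)%Z.

Section SparseUniqueness.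

Variables (n : nat) (D : nat -> bool).
Hypothesis HD : forall d, D d = true -> (d <= n * n)%nat.

Lemma in_Delta_Zabs_le x : in_Delta D x -> (Z.abs x <= Z.of_nat (n * n))%Z.
Proof. intros [d [d' [Hd [Hd' ->]]]]. apply HD in Hd, Hd'. lia. Qed.

Lemma DeltaDelta_digits_bound c :
  DeltaDelta_digits D c -> forall j, Rabs (IZR (c (S j))) <= 2 * (INR n * INR n).
Proof.
  intros Hc j. destruct (Hc j) as [x [y [Hx [Hy ->]]]].
  apply in_Delta_Zabs_le in Hx, Hy.
  rewrite <- abs_IZR, <- mult_INR, INR_IZR_INZ, <- mult_IZR. apply IZR_le. lia.
Qed.

Hypothesis Hn : (2 <= n)%nat.
Hypothesis Hsparse : sparse n D.

Lemma zero_expansion_digit1_eq0 c :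
  DeltaDelta_digits D c -> expansion n c (RtoC 0) -> c 1%nat = 0%Z.
Proof.
  intros Hc Hzero.
  pose proof (DeltaDelta_digits_bound c Hc) as Hbound.
  assert (Hsmall : (Z.abs (c 1%nat) <= if (5 <=? n)%nat then 2 else 3)%Z).
  { destruct (Nat.leb_spec 5 n).
    - now apply (zero_expansion_digit1_le2 n).
    - destruct (Nat.eq_dec n 2).
      + now apply (zero_expansion_digit1_le3_n2 n).
      + apply (zero_expansion_digit1_le3_n34 n); auto. lia. }
  destruct (Hc 0%nat) as [x [y [Hx [Hy Hxy]]]].
  destruct (Z.eq_dec x y) as [<-|Hne]; [lia|].
  specialize (Hsparse x y Hx Hy Hne). rewrite <- Hxy in Hsparse.
  destruct (5 <=? n)%nat; lia.
Qed.

Lemma zero_expansion_digits_eq0 c :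
  DeltaDelta_digits D c -> expansion n c (RtoC 0) -> forall j, c (S j) = 0%Z.
Proof.
  intros Hc Hzero j. revert c Hc Hzero. induction j as [|j IH]; intros c Hc Hzero.
  - exact (zero_expansion_digit1_eq0 c Hc Hzero).
  - apply (IH (fun j => c (S j))); [intro i; apply Hc|].
    pose proof (expansion_shift _ _ _ Hzero) as Hshift.
    rewrite (zero_expansion_digit1_eq0 c Hc Hzero) in Hshift.
    now replace (base n * RtoC 0 - RtoC (IZR 0))%C with (RtoC 0) in Hshift by (simpl; ring).
Qed.

End SparseUniqueness.

(** * Digits of [C_{n,D} ∩ (C_{n,D} + alpha)] *)

Definition common_digits (n : nat) (D : nat -> bool) (x : Z) : list nat :=
  filter (fun d => D d && inDz D (Z.of_nat d - x)) (seq 0 (n * n + 1)).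

Lemma card_shift_common_digits n D x : card_shift n D x = length (common_digits n D x).
Proof. reflexivity. Qed.

Lemma inDz_of_nat D (m : nat) : inDz D (Z.of_nat m) = D m.
Proof. unfold inDz. rewrite Nat2Z.id. destruct (Z.leb_spec 0 (Z.of_nat m)); [reflexivity|lia]. Qed.

Lemma inDzP D x : inDz D x = true <-> (0 <= x)%Z /\ D (Z.to_nat x) = true.
Proof. unfold inDz. now rewrite andb_true_iff, Z.leb_le. Qed.

Definition CnD_cap_shift (n : nat) (D : nat -> bool) (alpha : C) (z : C) : Prop :=
  CnD n D z /\ CnD n D (z - alpha)%C.

Lemma Rabs_digit_le (n x : nat) : (x <= n * n)%nat -> Rabs (IZR (Z.of_nat x)) <= INR n * INR n.
Proof.
  intro Hx. rewrite <- INR_IZR_INZ, Rabs_pos_eq by apply pos_INR.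
  rewrite <- mult_INR. now apply le_INR.
Qed.

Lemma Rabs_digit_sub_le (n x y : nat) : (x <= n * n)%nat -> (y <= n * n)%nat ->
  Rabs (IZR (Z.of_nat x - Z.of_nat y)) <= INR n * INR n.
Proof.
  intros Hx Hy. rewrite <- abs_IZR, <- mult_INR, INR_IZR_INZ. apply IZR_le. lia.
Qed.

Definition prefix (d : nat -> nat) (k : nat) : list nat := map (fun i => d (S i)) (seq 0 k).

Lemma nth_prefix d k i : (i < k)%nat -> nth i (prefix d k) 0%nat = d (S i).
Proof.
  intro Hi. unfold prefix.
  rewrite (nth_indep _ _ (d 1%nat)) by (rewrite length_map, length_seq; lia).
  change (d 1%nat) with ((fun i => d (S i)) 0%nat).
  now rewrite map_nth, seq_nth.
Qed.

Section CommonDigits.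

Variables (n : nat) (D : nat -> bool).
Hypothesis HD : forall d, D d = true -> (d <= n * n)%nat.

Lemma In_common_digits x d :
  In d (common_digits n D x) <-> D d = true /\ inDz D (Z.of_nat d - x) = true.
Proof.
  unfold common_digits. rewrite filter_In, in_seq, andb_true_iff.
  split; [tauto|]. intros [Hd Hdx]. split; auto. apply HD in Hd. lia.
Qed.

Lemma common_digits_le x d : In d (common_digits n D x) -> (d <= n * n)%nat.
Proof. intro H. apply HD, (proj1 (In_common_digits x d) H). Qed.

Variable a : nat -> Z.

Definition admissible (d : nat -> nat) : Prop :=
  forall j, (1 <= j)%nat -> In (d j) (common_digits n D (a j)).

Lemma admissible_le d j : admissible d -> (1 <= j)%nat -> (d j <= n * n)%nat.
Proof. intros Hd Hj. exact (common_digits_le _ _ (Hd j Hj)). Qed.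

Lemma admissible_D d j : admissible d -> (1 <= j)%nat -> D (d j) = true.
Proof. intros Hd Hj. exact (proj1 (proj1 (In_common_digits _ _) (Hd j Hj))). Qed.

Lemma admissible_sub_DeltaDelta d d' : admissible d -> admissible d' ->
  DeltaDelta_digits D (fun j => (Z.of_nat (d j) - Z.of_nat (d' j))%Z).
Proof.
  intros Hd Hd' j.
  assert (HDj : D (d (S j)) = true) by (apply admissible_D; auto; lia).
  exists (Z.of_nat (d (S j)) - Z.of_nat (d' (S j)))%Z, 0%Z. repeat split.
  - exists (d (S j)), (d' (S j)). repeat split; auto. apply admissible_D; auto. lia.
  - exists (d (S j)), (d (S j)). repeat split; auto. lia.
  - lia.
Qed.

Fixpoint digit_words (k : nat) : list (list nat) :=
  match k with
  | O => [[]]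
  | S k' => flat_map (fun p => map (fun d => p ++ [d]) (common_digits n D (a k))) (digit_words k')
  end.

Lemma length_digit_words k : length (digit_words k) = Mk n D a k.
Proof.
  induction k as [|k IH]; [reflexivity|]. simpl.
  rewrite (flat_map_constant_length (c := length (common_digits n D (a (S k))))).
  - now rewrite IH.
  - intros p _. apply length_map.
Qed.

Lemma In_digit_words k p : In p (digit_words k) ->
  length p = k /\ forall i, (i < k)%nat -> In (nth i p 0%nat) (common_digits n D (a (S i))).
Proof.
  revert p. induction k as [|k IH]; intros p Hp.
  - destruct Hp as [<-|[]]. split; [reflexivity|lia].
  - apply in_flat_map in Hp. destruct Hp as [q [Hq Hp]].
    apply in_map_iff in Hp. destruct Hp as [d [<- Hd]].
    destruct (IH q Hq) as [Hlen Hnth]. split.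
    + rewrite length_app. simpl. lia.
    + intros i Hi. destruct (Nat.lt_ge_cases i k).
      * rewrite app_nth1 by lia. auto.
      * assert (i = k) by lia. subst i. now rewrite <- Hlen, nth_middle, Hlen.
Qed.

Lemma NoDup_digit_words k : NoDup (digit_words k).
Proof.
  induction k as [|k IH]; simpl.
  - constructor; [intros []|constructor].
  - induction IH as [|p l Hp Hl IHl]; simpl; [constructor|].
    apply NoDup_app.
    + apply NoDup_map_NoDup_ForallPairs; [|apply NoDup_filter, seq_NoDup].
      intros d d' _ _ E. now apply app_inj_tail in E.
    + exact IHl.
    + intros w Hw Hw'. apply in_map_iff in Hw. destruct Hw as [d [<- _]].
      apply in_flat_map in Hw'. destruct Hw' as [q [Hq Hw']].
      apply in_map_iff in Hw'. destruct Hw' as [d' [E _]].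
      apply app_inj_tail in E. destruct E as [-> _]. contradiction.
Qed.

Lemma prefix_In_digit_words d k : admissible d -> In (prefix d k) (digit_words k).
Proof.
  intro Hd. induction k as [|k IH]; [now left|].
  simpl. apply in_flat_map. exists (prefix d k). split; [exact IH|].
  unfold prefix. rewrite seq_S, map_app. apply in_map_iff.
  exists (d (S k)). split; [reflexivity|apply Hd; lia].
Qed.

(* [p] continued by a fixed tail; the default [0] of [hd] is never used, since [a_j ∈ Delta]
   makes [common_digits n D (a j)] nonempty. *)
Definition word_digits (p : list nat) (j : nat) : nat :=
  nth (pred j) p (hd 0%nat (common_digits n D (a j))).

Hypothesis Ha : forall j, (1 <= j)%nat -> in_Delta D (a j).

Lemma common_digits_nonempty j : (1 <= j)%nat -> common_digits n D (a j) <> [].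
Proof.
  intros Hj Hnil. destruct (Ha j Hj) as [d [d' [Hd [Hd' Ea]]]].
  enough (In d (common_digits n D (a j))) by (rewrite Hnil in *; contradiction).
  apply In_common_digits. split; auto.
  now replace (Z.of_nat d - a j)%Z with (Z.of_nat d') by lia; rewrite inDz_of_nat.
Qed.

Lemma word_digits_admissible k p : In p (digit_words k) -> admissible (word_digits p).
Proof.
  intros Hp [|i] Hj; [lia|]. destruct (In_digit_words k p Hp) as [Hlen Hnth].
  unfold word_digits. simpl pred. destruct (Nat.lt_ge_cases i k).
  - rewrite nth_indep with (d' := 0%nat) by lia. auto.
  - rewrite nth_overflow by lia.
    destruct (common_digits n D (a (S i))) eqn:E; [|now left].
    now destruct (common_digits_nonempty (S i) Hj).
Qed.

Lemma Mk_pos k : (1 <= Mk n D a k)%nat.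
Proof.
  induction k as [|k IH]; simpl; [lia|].
  rewrite card_shift_common_digits.
  destruct (common_digits n D (a (S k))) eqn:E; [|simpl; nia].
  now destruct (common_digits_nonempty (S k)); [lia|].
Qed.

Variable alpha : C.
Hypothesis Hn : (2 <= n)%nat.
Hypothesis Hsparse : sparse n D.
Hypothesis Halpha : expansion n a alpha.

(* If [z] and [z - alpha] have digits [d_j], [d'_j] in [D], then the digits
   [d_j - d'_j - alpha_j ∈ Delta - Delta] expand [0], so [d'_j = d_j - alpha_j]. *)
Lemma CnD_cap_shift_iff z :
  CnD_cap_shift n D alpha z <->
  exists d, admissible d /\ expansion n (fun j => Z.of_nat (d j)) z.
Proof.
  split.
  - intros [[d [Hd Hz]] [d' [Hd' Hz']]]. exists d. split; auto.
    set (e := fun j => (Z.of_nat (d j) - Z.of_nat (d' j) - a j)%Z).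
    assert (He : expansion n e (RtoC 0)).
    { replace (RtoC 0) with (z - (z - alpha) - alpha)%C by (simpl; ring).
      exact (expansion_sub _ _ _ _ _ (expansion_sub _ _ _ _ _ Hz Hz') Halpha). }
    assert (Hdigits : DeltaDelta_digits D e).
    { intro j. exists (Z.of_nat (d (S j)) - Z.of_nat (d' (S j)))%Z, (a (S j)).
      repeat split; [|apply Ha; lia].
      exists (d (S j)), (d' (S j)). repeat split; [apply Hd|apply Hd']; lia. }
    intros [|j] Hj; [lia|].
    pose proof (zero_expansion_digits_eq0 n D HD Hn Hsparse e Hdigits He j) as Hej.
    apply In_common_digits. split; [apply Hd; lia|].
    unfold e in Hej. replace (Z.of_nat (d (S j)) - a (S j))%Z with (Z.of_nat (d' (S j))) by lia.
    rewrite inDz_of_nat. apply Hd'. lia.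
  - intros [d [Hd Hz]]. split.
    + exists d. split; auto. intros j Hj. apply (In_common_digits (a j)), Hd, Hj.
    + exists (fun j => Z.to_nat (Z.of_nat (d j) - a j)). split.
      * intros j Hj. apply (inDzP D), (In_common_digits (a j)), Hd, Hj.
      * eapply expansion_ext; [|exact (expansion_sub _ _ _ _ _ Hz Halpha)].
        intro j. pose proof (proj2 (proj1 (In_common_digits _ _) (Hd (S j) ltac:(lia)))) as H.
        apply inDzP in H. lia.
Qed.

(* [b^k (z - w)] is a Gaussian integer of modulus [< 1], so [z = w]; uniqueness of zero
   expansions then identifies the words. *)
Lemma digit_words_separated k p q z w :
  In p (digit_words k) -> In q (digit_words k) ->
  expansion n (fun j => Z.of_nat (word_digits p j)) z ->
  expansion n (fun j => Z.of_nat (word_digits q j)) w ->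
  Cmod (z - w)%C < (/ Cmod (base n)) ^ k -> p = q.
Proof.
  intros Hp Hq Hz Hw Hzw.
  destruct (In_digit_words k p Hp) as [Lp _], (In_digit_words k q Hq) as [Lq _].
  pose proof (expansion_sub _ _ _ _ _ Hz Hw) as Hsub.
  pose proof (Cmod_base_ge2 n Hn) as Hr.
  assert (Hpow : 0 < Cmod (base n) ^ k) by (apply pow_lt; lra).
  assert (Hzw0 : (z - w)%C = RtoC 0).
  { assert (Hg : (base n ^ k * (z - w))%C = RtoC 0).
    { apply gaussian_Cmod_lt1.
      - refine (expansion_finite_gaussian n k _ _ _ Hsub).
        intros j Hj. unfold word_digits. simpl pred. rewrite !nth_overflow by lia. lia.
      - rewrite Cmod_mult, Cmod_pow.
        replace 1 with (Cmod (base n) ^ k * (/ Cmod (base n)) ^ k)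
          by (rewrite <- Rpow_mult_distr, Rinv_r, pow1 by lra; reflexivity).
        now apply Rmult_lt_compat_l. }
    apply Cmod_eq_0. apply (f_equal Cmod) in Hg.
    rewrite Cmod_mult, Cmod_pow, Cmod_0 in Hg. nra. }
  rewrite Hzw0 in Hsub.
  pose proof (zero_expansion_digits_eq0 n D HD Hn Hsparse _
    (admissible_sub_DeltaDelta _ _ (word_digits_admissible k p Hp) (word_digits_admissible k q Hq))
    Hsub) as Heq.
  apply nth_ext with 0%nat 0%nat; [lia|]. intros i Hi. specialize (Heq i).
  unfold word_digits in Heq. simpl pred in Heq.
  rewrite (nth_indep p _ 0%nat), (nth_indep q _ 0%nat) in Heq by lia. lia.
Qed.

Lemma CnD_cap_shift_covers k :
  covers_with (Mk n D a k) (INR n * INR n * (/ Cmod (base n)) ^ k) (CnD_cap_shift n D alpha).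
Proof.
  exists (fun i z => exists d, admissible d /\ expansion n (fun j => Z.of_nat (d j)) z /\
                         prefix d k = nth i (digit_words k) []).
  split.
  - intros i _ z w [d [Hd [Hz Ez]]] [d' [Hd' [Hw Ew]]]. rewrite <- Ew in Ez.
    refine (expansion_tail_le n _ (Cmod_base_ge2 n Hn) k _ _ _ _ (expansion_sub _ _ _ _ _ Hz Hw)).
    + intros [|j] Hj; [lia|].
      rewrite <- (nth_prefix d k j), <- (nth_prefix d' k j), Ez by lia. lia.
    + intro j. apply Rabs_digit_sub_le; apply admissible_le; auto; lia.
  - intros z Hz. apply CnD_cap_shift_iff in Hz. destruct Hz as [d [Hd Hz]].
    destruct (In_nth _ _ [] (prefix_In_digit_words d k Hd)) as [i [Hi Ei]].
    exists i. split; [now rewrite <- length_digit_words|]. now exists d.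
Qed.

Lemma CnD_cap_shift_covers_ge k m delta :
  delta < (/ Cmod (base n)) ^ k -> covers_with m delta (CnD_cap_shift n D alpha) ->
  (Mk n D a k <= m)%nat.
Proof.
  intros Hdelta Hcov. rewrite <- length_digit_words.
  apply (covers_with_separated_le m delta _
           (fun p z => expansion n (fun j => Z.of_nat (word_digits p j)) z) _ Hcov
           (NoDup_digit_words k)).
  - intros p Hp. pose proof (word_digits_admissible k p Hp) as Hadm.
    destruct (expansion_exists n (INR n * INR n) (Cmod_base_ge2 n Hn)
                (fun j => Z.of_nat (word_digits p j))) as [z Hz].
    { intro j. apply Rabs_digit_le, admissible_le; auto. lia. }
    exists z. split; auto. apply CnD_cap_shift_iff. now exists (word_digits p).
  - intros p q z w Hp Hq Hz Hw Hzw. apply (digit_words_separated k p q z w); auto. lra.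
Qed.

End CommonDigits.

Lemma card_shift_le n D x : (card_shift n D x <= n * n + 1)%nat.
Proof. unfold card_shift. rewrite <- (length_seq (n * n + 1) 0) at 2. apply filter_length_le. Qed.

Lemma Mk_le_pow n D a k : INR (Mk n D a k) <= Cmod (base n) ^ (2 * k).
Proof.
  assert (Hsq : Cmod (base n) ^ 2 = INR n * INR n + 1).
  { rewrite Cmod2_alt. unfold base, Re, Im. simpl. ring. }
  rewrite pow_mult, Hsq.
  induction k as [|k IH]; simpl Mk; [simpl; lra|].
  rewrite mult_INR, Rmult_comm. simpl pow.
  apply Rmult_le_compat; try apply pos_INR; [|exact IH].
  replace (INR n * INR n + 1) with (INR (n * n + 1)) by (rewrite plus_INR, mult_INR; reflexivity).
  apply le_INR, card_shift_le.
Qed.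

Theorem theorem4p9 (n : nat) (D : nat -> bool) (alpha : C) (a : nat -> Z) :
  (2 <= n)%nat ->
  (forall d, D d = true -> (d <= n * n)%nat) ->
  sparse n D ->
  (forall j, (1 <= j)%nat -> in_Delta D (a j)) ->
  expansion n a alpha ->
  lower_box_dim (fun z => CnD n D z /\ CnD n D (Cminus z alpha)) =
  LimInf_seq (fun k => ln (INR (Mk n D a k)) / (INR k * ln (Cmod (base n)))).
Proof.
  intros Hn HD Hsparse Ha Halpha.
  pose proof (Cmod_base_ge2 n Hn) as Hr.
  assert (HK : 1 <= INR n * INR n) by (apply (le_INR 2) in Hn; simpl in Hn; nra).
  apply (lower_box_dim_eq_LimInf _ _ (INR n * INR n)); [lra|exact HK| | | |].
  - exact (CnD_cap_shift_covers n D HD a Ha alpha Hn Hsparse Halpha).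
  - exact (CnD_cap_shift_covers_ge n D HD a Ha alpha Hn Hsparse Halpha).
  - exact (Mk_pos n D HD a Ha).
  - intro k. apply Mk_le_pow.
Qed.
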